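(* Let $(\mathcal{G},S)$ be an instance of \textsc{Temporally Disjoint Walks} where $\mathcal{G}$ is a temporal line, and let $\mathcal{S}$ be a solution that minimizes the sum of the lengths of its walks among all solutions. Let $W\in\mathcal{S}$ be a temporal $(s,z)$-walk in which the transitions $(a,b,t),(b,a,t')$ with $t<t'$ are consecutive. Then there exists a temporal $(s',z')$-walk $W'\neq W$ in $\mathcal{S}$ such that $W'$ contains at least one of the transitions $(s',a',t'')$ or $(a',z',t'')$ for some vertex $a'$ and some $t''$ with $t<t''<t'$, where the distance between $a$ and $a'$ in the underlying path of $\mathcal{G}$ is at most $|S|$.
   Context: A temporal graph $\mathcal{G}=(V,E_1,\ldots,E_T)$ has vertex set $V$ and edge sets $E_1,\ldots,E_T\subseteq\binom{V}{2}$; it is a temporal line if its underlying graph $(V,\bigcup_i E_i)$ is a path. A temporal $(s,z)$-walk of length $k$ from $s=v_0$ to $z=v_k$ is a sequence of transitions $((v_{i-1},v_i,t_i))_{i=1}^k$ with $\{v_{i-1},v_i\}\in E_{t_i}$ and $t_1<\cdots<t_k$. It occupies $v_i$ during $[t_i,t_{i+1}]$ for $i\in[k-1]$, $v_0$ during $[t_1,t_1]$ and $v_k$ during $[t_k,t_k]$. Two temporal walks are temporally disjoint unless some vertex is occupied by both during intersecting time intervals. \textsc{Temporally Disjoint Walks} asks, given $\mathcal{G}$ and a multiset $S\subseteq V\times V$ of source-sink pairs, for pairwise temporally disjoint temporal $(s_i,z_i)$-walks, one for each $(s_i,z_i)\in S$; a solution $\mathcal{S}$ is such a family, and $|S|$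 is the number of source-sink pairs. *)

From mathcomp Require Import all_boot.
Set Implicit Arguments. Unset Strict Implicit. Unset Printing Implicit Defensive.

(* A temporal graph on vertex set V (a finType) with lifetime T is given by
   E : nat -> rel V; the edge set at time t (1 <= t <= T) is E t.  Values of E
   outside [1, T] are ignored everywhere. *)

Definition temporal_graph (V : finType) (T : nat) (E : nat -> rel V) : Prop :=
  forall t, 1 <= t <= T -> irreflexive (E t) /\ symmetric (E t).

Definition ug_edge (V : finType) (T : nat) (E : nat -> rel V) : rel V :=
  fun u v => has (fun t => E t u v) (iota 1 T).

Definition temporal_line (V : finType) (T : nat) (E : nat -> rel V) : Prop :=
  temporal_graph T E /\
  exists p : seq V, [/\ uniq p, forall v, v \in p &
    forall u v, ug_edge T E u v = ((u, v) \in zip p (behead p))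
                                  || ((v, u) \in zip p (behead p))].

Definition ug_dist_le (V : finType) (T : nat) (E : nat -> rel V)
  (u v : V) (k : nat) : Prop :=
  exists p : seq V, [/\ size p <= k, path (ug_edge T E) u p & last u p = v].

Definition trsrc (V : Type) (x : V * V * nat) : V := x.1.1.
Definition trdst (V : Type) (x : V * V * nat) : V := x.1.2.
Definition trtime (V : Type) (x : V * V * nat) : nat := x.2.

Definition is_twalk (V : finType) (T : nat) (E : nat -> rel V)
  (s z : V) (w : seq (V * V * nat)) : Prop :=
  (forall x, x \in w -> 1 <= trtime x <= T /\ E (trtime x) (trsrc x) (trdst x)) /\
  match w with
  | [::] => s = z
  | x :: w' => [/\ trsrc x = s, trdst (last x w') = z &
                 path (fun y y' => (trdst y == trsrc y') && (trtime y < trtime y')) x w']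
  end.

Definition occupies (V : Type) (w : seq (V * V * nat)) (v : V) (a b : nat) : Prop :=
  match w with
  | [::] => False
  | x0 :: _ =>
    let x i := nth x0 w i in
    let k := size w in
    [\/ v = trsrc (x 0) /\ a = trtime (x 0) /\ b = trtime (x 0),
        (exists i, i.+1 < k /\ v = trdst (x i) /\ a = trtime (x i) /\ b = trtime (x i.+1))
      | v = trdst (x k.-1) /\ a = trtime (x k.-1) /\ b = trtime (x k.-1)]
  end.

Definition tdisjoint (V : Type) (w1 w2 : seq (V * V * nat)) : Prop :=
  ~ exists v a b c d, [/\ occupies w1 v a b, occupies w2 v c d, a <= d & c <= b].

(* The multiset S of source-sink pairs is given as an indexed family
   S : 'I_n -> V * V (so |S| = n); a solution assigns to each index i a
   temporal (S i).1-(S i).2 walk, pairwise temporally disjoint. *)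
Definition is_solution (V : finType) (T : nat) (E : nat -> rel V) (n : nat)
  (S : 'I_n -> V * V) (sol : 'I_n -> seq (V * V * nat)) : Prop :=
  (forall i, is_twalk T E (S i).1 (S i).2 (sol i)) /\
  (forall i j, i != j -> tdisjoint (sol i) (sol j)).

From mathcomp Require Import all_boot zify.
From Stdlib Require Import Classical.
Set Implicit Arguments. Unset Strict Implicit. Unset Printing Implicit Defensive.

(* Cutting the back-and-forth (a,b,t),(b,a,t') out of W leaves a family of
   walks of smaller total length, so by minimality it is no longer a solution:
   some other walk W1 stays at a during an interval [g,h] with t < g <= h < t'.
   If W1 starts or ends there, its first or last transition is the one sought.
   Otherwise W1 enters a from a neighbour x and leaves it towards a neighbour y;
   both differ from b, which W occupies during [t,t'], and on a path a has at
   most two neighbours, so x = y and W1 makes the back-and-forth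
   (x,a,g),(a,x,h).  Iterating gives walks W, W1, W2, ... whose back-and-forths
   have nested waiting intervals and move one edge at each step.  A walk met
   earlier has no transition inside the later intervals, so these walks are
   pairwise distinct and the process ends within |S| steps. *)

Section ConsecutivePairs.
Variable A : eqType.
Implicit Types (s : seq A) (x y : A).

Definition consec_pairs s := zip s (behead s).

Lemma consec_pairs_cat x s1 y s2 :
  consec_pairs (x :: s1 ++ y :: s2) =
  consec_pairs (x :: s1) ++ (last x s1, y) :: consec_pairs (y :: s2).
Proof. by elim: s1 x => [|x' s1 IH] x //=; rewrite -IH. Qed.

Lemma consec_pairs_mid s1 x y s2 : (x, y) \in consec_pairs (s1 ++ x :: y :: s2).
Proof.
elim: s1 => [|x0 s1 IH]; first exact: mem_head.
by case: s1 IH => [|x1 s1] IH; rewrite [_ \in _]in_cons IH orbT.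
Qed.

Lemma consec_pairsP s x y :
  reflect (exists s1 s2, s = s1 ++ x :: y :: s2) ((x, y) \in consec_pairs s).
Proof.
apply: (iffP idP) => [|[s1 [s2 ->]]]; last exact: consec_pairs_mid.
elim: s => [|x0 s IH] //; case: s IH => [|x1 s] IH //.
rewrite [_ \in _]in_cons => /orP [/eqP [-> ->]|/IH [s1 [s2 ->]]].
  by exists [::], s.
by exists (x0 :: s1), s2.
Qed.

Lemma consec_pairs_catl s1 s2 x y :
  (x, y) \in consec_pairs s1 -> (x, y) \in consec_pairs (s1 ++ s2).
Proof.
case/consec_pairsP=> l1 [l2 ->]; apply/consec_pairsP.
by exists l1, (l2 ++ s2); rewrite -catA.
Qed.

Lemma consec_pairs_catr s1 s2 x y :
  (x, y) \in consec_pairs s2 -> (x, y) \in consec_pairs (s1 ++ s2).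
Proof.
case/consec_pairsP=> l1 [l2 ->]; apply/consec_pairsP.
by exists (s1 ++ l1), l2; rewrite catA.
Qed.

Lemma consec_pairs_meml s x y : (x, y) \in consec_pairs s -> x \in s.
Proof. by case/consec_pairsP=> s1 [s2 ->]; rewrite mem_cat mem_head orbT. Qed.

Lemma consec_pairs_memr s x y : (x, y) \in consec_pairs s -> y \in s.
Proof. by case/consec_pairsP=> s1 [s2 ->]; rewrite mem_cat !inE eqxx !orbT. Qed.

Lemma consec_pairs_nth x0 s x y :
  (x, y) \in consec_pairs s <->
  exists2 i, i.+1 < size s & (x, y) = (nth x0 s i, nth x0 s i.+1).
Proof.
split=> [/consec_pairsP [s1 [s2 ->]]|[i lt_i [-> ->]]]; last apply/consec_pairsP.
  exists (size s1); first by rewrite size_cat /=; lia.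
  by rewrite !nth_cat ltnn subnn ltnNge leqnSn /= subSnn.
exists (take i s), (drop i.+2 s).
by rewrite -[LHS](cat_take_drop i) (drop_nth x0) 1?ltnW // (drop_nth x0).
Qed.

Lemma uniq_consec_pairs_next s x y :
  uniq s -> (x, y) \in consec_pairs s -> y = nth x s (index x s).+1.
Proof.
move=> uniq_s /consec_pairsP [s1 [s2 def_s]]; move: uniq_s; rewrite def_s.
rewrite cat_uniq /= => /and3P [_ /norP [x_notin_s1 _] _].
by rewrite index_cat (negbTE x_notin_s1) /= eqxx addn0 nth_cat ltnNge leqnSn /= subSnn.
Qed.

Lemma uniq_consec_pairs_prev s x y :
  uniq s -> (x, y) \in consec_pairs s -> x = nth y s (index y s).-1.
Proof.
move=> uniq_s /consec_pairsP [s1 [s2 def_s]]; move: uniq_s; rewrite def_s.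
rewrite cat_uniq /= !inE.
case/and3P=> _ /norP [_ /norP [y_notin_s1 _]] /andP [/norP [neq_xy _] _].
rewrite index_cat (negbTE y_notin_s1) /= (negbTE neq_xy) eqxx /= addn1 /=.
by rewrite nth_cat ltnn subnn.
Qed.

End ConsecutivePairs.

Section Occupancy.
Variable V : eqType.
Implicit Types (w : seq (V * V * nat)) (x y : V * V * nat).

Lemma occupies_consE x0 w v al be :
  occupies (x0 :: w) v al be <->
  [\/ (v, al, be) = (trsrc x0, trtime x0, trtime x0),
      exists x y, (x, y) \in consec_pairs (x0 :: w) /\
                  (v, al, be) = (trdst x, trtime x, trtime y)
    | (v, al, be) = (trdst (last x0 w), trtime (last x0 w), trtime (last x0 w))].
Proof.
rewrite /occupies -[nth x0 _ (size w)]/(nth x0 (x0 :: w) (size (x0 :: w)).-1) nth_last.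
split.
  case=> [[-> [-> ->]]|[i [lt_i [-> [-> ->]]]]|[-> [-> ->]]];
    [constructor 1|constructor 2|constructor 3] => //.
  exists (nth x0 (x0 :: w) i), (nth x0 (x0 :: w) i.+1); split=> //.
  by apply/(consec_pairs_nth x0); exists i.
case=> [[-> -> ->]|[x [y [/(consec_pairs_nth x0) [i lt_i [-> ->]] [-> -> ->]]]]|[-> -> ->]].
- by constructor 1.
- by constructor 2; exists i.
- by constructor 3.
Qed.

Lemma occupies_head x0 w : occupies (x0 :: w) (trsrc x0) (trtime x0) (trtime x0).
Proof. by apply/occupies_consE; constructor 1. Qed.

Lemma occupies_last x0 w :
  occupies (x0 :: w) (trdst (last x0 w)) (trtime (last x0 w)) (trtime (last x0 w)).
Proof. by apply/occupies_consE; constructor 3. Qed.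

Lemma occupies_consec w x y :
  (x, y) \in consec_pairs w -> occupies w (trdst x) (trtime x) (trtime y).
Proof. by case: w => // x0 w xy; apply/occupies_consE; constructor 2; exists x, y. Qed.

Lemma occupies_start w v al be : occupies w v al be -> exists2 x, x \in w & trtime x = al.
Proof.
case: w => // x0 w.
case/occupies_consE=> [[_ -> _]|[x [y [/consec_pairs_meml x_in [_ -> _]]]]|[_ -> _]].
- by exists x0; rewrite ?mem_head.
- by exists x.
- by exists (last x0 w); rewrite ?mem_last.
Qed.

Lemma tdisjoint_sym w1 w2 : tdisjoint w1 w2 -> tdisjoint w2 w1.
Proof.
by move=> dis [v [a [b [c [d [o1 o2 le_ad le_cb]]]]]]; apply: dis; exists v, c, d, a, b.
Qed.

End Occupancy.

Section Walks.
Variables (V : finType) (T : nat) (E : nat -> rel V).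
Implicit Types (w : seq (V * V * nat)) (x y : V * V * nat).

Lemma transitionE x : (trsrc x, trdst x, trtime x) = x.
Proof. by case: x => [[]]. Qed.

Lemma twalk_consec s z w x y : is_twalk T E s z w -> (x, y) \in consec_pairs w ->
  trdst x = trsrc y /\ trtime x < trtime y.
Proof.
case: w => [|x0 w] [_ walk_w] //; case: walk_w => _ _ /(pathP x0) linked_w.
by case/(consec_pairs_nth x0) => i lt_i [-> ->]; have /andP [/eqP -> ->] := linked_w i lt_i.
Qed.

Lemma twalk_occupies_le s z w v al be :
  is_twalk T E s z w -> occupies w v al be -> al <= be.
Proof.
case: w => // x0 w walk_w /occupies_consE [[_ -> ->]|[x [y [xy [_ -> ->]]]]|[_ -> ->]] //.
by have [_ /ltnW] := twalk_consec walk_w xy.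
Qed.

Lemma twalk_sorted s z w :
  is_twalk T E s z w -> sorted (fun x y => trtime x < trtime y) w.
Proof.
case: w => [|x0 w] [_ walk_w] //; case: walk_w => _ _.
by apply: sub_path => x y /andP [].
Qed.

Lemma twalk_time_outside s z p1 p2 x0 x1 x :
  is_twalk T E s z (p1 ++ x0 :: x1 :: p2) -> x \in p1 ++ x0 :: x1 :: p2 ->
  trtime x <= trtime x0 \/ trtime x1 <= trtime x.
Proof.
move/twalk_sorted; rewrite sorted_pairwise; last by move=> ? ? ?; apply: ltn_trans.
rewrite pairwise_cat /= => /and3P [/allrelP before _ /andP [_ /andP [/allP after _]]].
rewrite mem_cat !inE => /or4P [x_in|/eqP ->|/eqP ->|x_in]; [|by left|by right|].
  by left; apply/ltnW/before; rewrite ?mem_head.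
by right; apply/ltnW/after.
Qed.

Lemma twalk_occupies_src s z w x : is_twalk T E s z w -> x \in w ->
  exists2 al, al <= trtime x & occupies w (trsrc x) al (trtime x).
Proof.
move=> walk_w x_in; case: _ / (splitPr x_in) walk_w => -[|y l1] l2 walk_w.
  by exists (trtime x); last exact: occupies_head.
have yx : (last y l1, x) \in consec_pairs (y :: l1 ++ x :: l2).
  by rewrite consec_pairs_cat mem_cat mem_head orbT.
have [<- /ltnW le_yx] := twalk_consec walk_w yx.
by exists (trtime (last y l1)); last exact: occupies_consec yx.
Qed.

Lemma twalk_occupies_dst s z w x : is_twalk T E s z w -> x \in w ->
  exists2 be, trtime x <= be & occupies w (trdst x) (trtime x) be.
Proof.
move=> walk_w x_in; case: _ / (splitPr x_in) walk_w => l1 [|y l2] walk_w.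
  exists (trtime x) => //; case: l1 {walk_w} => [|y l1]; first exact: occupies_last x [::].
  by have := occupies_last y (l1 ++ [:: x]); rewrite last_cat.
have [_ /ltnW le_xy] := twalk_consec walk_w (consec_pairs_mid l1 x y l2).
by exists (trtime y); last exact: occupies_consec (consec_pairs_mid l1 x y l2).
Qed.

Lemma twalk_occupies_cases s z w u g h : is_twalk T E s z w -> occupies w u g h ->
  [\/ exists y : V, [/\ u = s, h = g & (s, y, g) \in w],
      exists x : V, [/\ u = z, h = g & (x, z, g) \in w]
    | exists (x y : V) l1 l2, w = l1 ++ (x, u, g) :: (u, y, h) :: l2].
Proof.
case: w => // x0 w walk_w; have [_ [<- <- _]] := walk_w.
case/occupies_consE=> [[-> -> ->]|[x [y [xy [-> -> ->]]]]|[-> -> ->]].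
- by constructor 1; exists (trdst x0); rewrite transitionE mem_head.
- have [link _] := twalk_consec walk_w xy.
  constructor 3; case/consec_pairsP: xy => l1 [l2 ->].
  by exists (trsrc x), (trdst y), l1, l2; rewrite transitionE link transitionE.
- by constructor 2; exists (trsrc (last x0 w)); rewrite transitionE mem_last.
Qed.

End Walks.

Section Shortcut.
Variables (V : finType) (T : nat) (E : nat -> rel V).
Variables (s z u v : V) (c d : nat) (p1 p2 : seq (V * V * nat)).
Local Notation detour := (p1 ++ (u, v, c) :: (v, u, d) :: p2).
Hypothesis walk_detour : is_twalk T E s z detour.

Lemma twalk_shortcut : is_twalk T E s z (p1 ++ p2).
Proof.
case: walk_detour => trans_ok linked_detour; split.
  move=> x x_in; apply: trans_ok; move: x_in.
  by rewrite !mem_cat !inE => /orP [->|->]; rewrite ?orbT.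
case: p1 linked_detour => [|x0 q1] /=.
  case=> <- <- /= /andP [_ linked_p2]; case: p2 linked_p2 => [|x1 q2] //=.
  by case/andP=> /andP [/eqP <- _].
case=> -> <-; rewrite !last_cat !cat_path /=.
case/and4P=> -> /andP [/eqP dst_q1 lt_q1] /andP [_ lt_cd].
case: p2 => [|x1 q2] /=; first by split=> //; rewrite dst_q1.
case/andP=> /andP [/eqP src_p2 lt_p2] ->; split=> //.
rewrite dst_q1 -src_p2 eqxx andbT; exact: ltn_trans lt_q1 (ltn_trans lt_cd lt_p2).
Qed.

Lemma occupies_shortcut x al be : occupies (p1 ++ p2) x al be ->
  (exists al' be', [/\ occupies detour x al' be', al' <= al & be <= be'])
  \/ [/\ x = u, occupies detour u al c & occupies detour u d be].
Proof.
case: p1 walk_detour => [|x0 q1] walk; case: p2 walk => [|x1 q2] walk //.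
all: rewrite ?cat0s ?cats0.
- have XY_x1 := consec_pairs_mid [:: (u, v, c)] (v, u, d) x1 q2.
  have [src_x1 /ltnW le_dx1] := twalk_consec walk XY_x1.
  case/occupies_consE=> [[-> -> ->]|[y [y' [yy' [-> -> ->]]]]|[-> -> ->]]; left.
  + by exists d, (trtime x1); split=> //; rewrite -src_x1; apply: occupies_consec XY_x1.
  + exists (trtime y), (trtime y'); split=> //; apply: occupies_consec.
    exact: (consec_pairs_catr [:: (u, v, c); (v, u, d)] yy').
  + exists (trtime (last x1 q2)), (trtime (last x1 q2)); split=> //.
    exact: (occupies_last (u, v, c)).
- have q1_X : (last x0 q1, (u, v, c)) \in
      consec_pairs (x0 :: q1 ++ [:: (u, v, c); (v, u, d)]).
    by rewrite consec_pairs_cat mem_cat mem_head orbT.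
  have [_ /ltnW le_q1c] := twalk_consec walk q1_X.
  case/occupies_consE=> [[-> -> ->]|[y [y' [yy' [-> -> ->]]]]|[-> -> ->]]; left.
  + by exists (trtime x0), (trtime x0); split=> //; apply: occupies_head.
  + exists (trtime y), (trtime y'); split=> //.
    exact: (occupies_consec (consec_pairs_catl _ yy')).
  + by exists (trtime (last x0 q1)), c; split=> //; apply: occupies_consec q1_X.
- have q1_X : (last x0 q1, (u, v, c)) \in
      consec_pairs (x0 :: q1 ++ [:: (u, v, c), (v, u, d), x1 & q2]).
    by rewrite consec_pairs_cat mem_cat mem_head orbT.
  have Y_x1 := consec_pairs_mid (x0 :: q1 ++ [:: (u, v, c)]) (v, u, d) x1 q2.
  rewrite /= -catA /= in Y_x1.
  have [dst_q1 _] := twalk_consec walk q1_X.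
  rewrite cat_cons; case/occupies_consE=> [[-> -> ->]|[y [y' [yy' [-> -> ->]]]]|[-> -> ->]].
  + by left; exists (trtime x0), (trtime x0); split=> //; apply: occupies_head.
  + move: yy'; rewrite consec_pairs_cat mem_cat inE => /or3P [yy'|/eqP [-> ->]|yy'].
    * left; exists (trtime y), (trtime y'); split=> //.
      exact: (occupies_consec (consec_pairs_catl _ yy')).
    * have occ_before := occupies_consec q1_X; rewrite dst_q1 in occ_before.
      by right; split; [exact: dst_q1|exact: occ_before|exact: occupies_consec Y_x1].
    * left; exists (trtime y), (trtime y'); split=> //; apply/occupies_consec.
      have := consec_pairs_catr (x0 :: q1 ++ [:: (u, v, c); (v, u, d)]) yy'.
      by rewrite /= -catA.
  + rewrite last_cat /=; left.
    exists (trtime (last x1 q2)), (trtime (last x1 q2)); split=> //.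
    have := occupies_last x0 (q1 ++ [:: (u, v, c), (v, u, d), x1 & q2]).
    by rewrite !last_cat.
Qed.

Lemma tdisjoint_shortcut w : tdisjoint detour w ->
  (forall g h, c < g -> h < d -> ~ occupies w u g h) -> tdisjoint (p1 ++ p2) w.
Proof.
move=> dis no_visit [x [al [be [g [h [occ occ_w le_alh le_gbe]]]]]].
case: (occupies_shortcut occ) =>
  [[al' [be' [occ' le_al le_be]]]|[eq_xu occ_before occ_after]].
  apply: dis; exists x, al', be', g, h; split=> //.
    exact: leq_trans le_alh.
  exact: leq_trans le_be.
rewrite eq_xu in occ_w.
have lt_cg : c < g.
  by rewrite ltnNge; apply/negP => le_gc; apply: dis; exists u, al, c, g, h.
have lt_hd : h < d.
  by rewrite ltnNge; apply/negP => le_dh; apply: dis; exists u, d, be, g, h.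
exact: no_visit lt_cg lt_hd occ_w.
Qed.

End Shortcut.

Section MinimalSolution.
Variables (V : finType) (T : nat) (E : nat -> rel V) (n : nat).
Variables (S : 'I_n -> V * V) (sol : 'I_n -> seq (V * V * nat)).
Hypothesis sol_ok : is_solution T E S sol.
Hypothesis sol_min : forall sol', is_solution T E S sol' ->
  \sum_(i < n) size (sol i) <= \sum_(i < n) size (sol' i).

Lemma minimal_detour_visited k p1 p2 u v c d :
  sol k = p1 ++ (u, v, c) :: (v, u, d) :: p2 ->
  exists2 j, j != k & exists g h, [/\ c < g, h < d & occupies (sol j) u g h].
Proof.
move=> sol_k; apply: NNPP => no_visit; have [walks disj] := sol_ok.
have walk_k := walks k; rewrite sol_k in walk_k.
pose sol' l := if l == k then p1 ++ p2 else sol l.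
have disj_k l : l != k -> tdisjoint (p1 ++ p2) (sol l).
  move=> ne_lk; apply: (tdisjoint_shortcut walk_k).
    by rewrite -sol_k; apply: disj; rewrite eq_sym.
  by move=> g h lt_cg lt_hd occ; apply: no_visit; exists l => //; exists g, h.
have sol'_ok : is_solution T E S sol'.
  split=> [l|l1 l2 ne_l12]; rewrite /sol'.
    by case: eqP => [->|_]; [apply: twalk_shortcut walk_k|apply: walks].
  case: eqP => [eq1|/eqP ne1]; case: eqP => [eq2|/eqP ne2].
  - by move: ne_l12; rewrite eq1 eq2 eqxx.
  - exact: disj_k.
  - exact/tdisjoint_sym/disj_k.
  - exact: disj.
have := sol_min sol'_ok.
rewrite (bigD1 k) // [X in _ <= X](bigD1 k) //= /sol' eqxx sol_k !size_cat /=.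
rewrite [X in _ <= _ + X](eq_bigr (fun l => size (sol l))) => [|l /negbTE ->] //.
lia.
Qed.

End MinimalSolution.

Section UnderlyingGraph.
Variables (V : finType) (T : nat) (E : nat -> rel V).

Lemma ug_dist_le_step a u x k :
  ug_dist_le T E a u k -> ug_edge T E u x -> ug_dist_le T E a x k.+1.
Proof.
case=> p [size_p path_p last_p] ux; exists (rcons p x).
by rewrite size_rcons rcons_path path_p last_p last_rcons.
Qed.

Lemma ug_dist_le_mono a x k k' :
  ug_dist_le T E a x k -> k <= k' -> ug_dist_le T E a x k'.
Proof.
by case=> p [size_p path_p last_p] le_kk'; exists p; split=> //; apply: leq_trans le_kk'.
Qed.

Hypothesis graph_E : temporal_graph T E.

Lemma ug_edge_sym : symmetric (ug_edge T E).
Proof.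
move=> x y; apply/hasP/hasP=> -[t t_in e_t]; exists t => //.
  have t_range : 1 <= t <= T by move: t_in; rewrite mem_iota; lia.
  by have [_ <-] := graph_E t_range.
have t_range : 1 <= t <= T by move: t_in; rewrite mem_iota; lia.
by have [_ ->] := graph_E t_range.
Qed.

Lemma twalk_ug_edge s z w x y tx : is_twalk T E s z w -> (x, y, tx) \in w ->
  ug_edge T E x y.
Proof.
case=> trans_ok _ /trans_ok [/= t_range e_xy]; apply/hasP; exists tx => //.
by rewrite mem_iota; lia.
Qed.

Lemma twalk_ug_edge_rev s z w x y tx : is_twalk T E s z w -> (x, y, tx) \in w ->
  ug_edge T E y x.
Proof. by move=> walk_w xy_in; rewrite ug_edge_sym (twalk_ug_edge walk_w xy_in). Qed.

Hypothesis line_E : temporal_line T E.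

Lemma ug_edge_two_nbrs u : exists y1 y2, forall x, ug_edge T E u x -> x = y1 \/ x = y2.
Proof.
case: line_E => _ [p [uniq_p _ ug_p]].
exists (nth u p (index u p).+1), (nth u p (index u p).-1) => x; rewrite ug_p.
case/orP=> [ux|xu]; [left; exact: uniq_consec_pairs_next ux|right].
exact: uniq_consec_pairs_prev xu.
Qed.

Lemma ug_edge_other_nbr u v x y : ug_edge T E u v -> ug_edge T E u x -> ug_edge T E u y ->
  x != v -> y != v -> x = y.
Proof.
have [y1 [y2 nbrs]] := ug_edge_two_nbrs u.
by move=> /nbrs [] -> /nbrs [] -> /nbrs [] -> //; rewrite eqxx.
Qed.

End UnderlyingGraph.

Lemma card_notin_lt (I : finType) (A : {set I}) x : x \notin A -> #|A| < #|I|.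
Proof. by move=> x_notin; have := max_card (x |: A); rewrite cardsU1 x_notin. Qed.

Section DetourChain.
Variables (V : finType) (T : nat) (E : nat -> rel V) (n : nat).
Variables (S : 'I_n -> V * V) (sol : 'I_n -> seq (V * V * nat)).
Hypothesis line_E : temporal_line T E.
Hypothesis sol_ok : is_solution T E S sol.
Hypothesis sol_min : forall sol', is_solution T E S sol' ->
  \sum_(i < n) size (sol i) <= \sum_(i < n) size (sol' i).

Lemma detour_visitor_returns k j p1 p2 l1 l2 u v c d x y g h :
  j != k -> sol k = p1 ++ (u, v, c) :: (v, u, d) :: p2 ->
  sol j = l1 ++ (x, u, g) :: (u, y, h) :: l2 -> c <= g -> h <= d -> x = y.
Proof.
move=> ne_jk sol_k sol_j le_cg le_hd; have [walks disj] := sol_ok.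
have in_k : (u, v, c) \in sol k by rewrite sol_k mem_cat mem_head orbT.
have consec_j : ((x, u, g), (u, y, h)) \in consec_pairs (sol j).
  by rewrite sol_j consec_pairs_mid.
have xu_in : (x, u, g) \in sol j := consec_pairs_meml consec_j.
have uy_in : (u, y, h) \in sol j := consec_pairs_memr consec_j.
have occ_v : occupies (sol k) v c d.
  by rewrite sol_k; exact: occupies_consec (consec_pairs_mid p1 (u, v, c) (v, u, d) p2).
have [al le_alg occ_x] : exists2 al, al <= g & occupies (sol j) x al g :=
  twalk_occupies_src (walks j) xu_in.
have [be le_hbe occ_y] : exists2 be, h <= be & occupies (sol j) y h be :=
  twalk_occupies_dst (walks j) uy_in.
have [_ lt_gh] : _ /\ g < h := twalk_consec (walks j) consec_j.
apply: (ug_edge_other_nbr line_E (u := u) (v := v)).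
- exact: twalk_ug_edge (walks k) in_k.
- exact: (twalk_ug_edge_rev (proj1 line_E) (walks j) xu_in).
- exact: twalk_ug_edge (walks j) uy_in.
- apply/eqP => eq_xv; apply: (disj j k ne_jk); exists v, al, g, c, d.
  by rewrite -{1}eq_xv; split=> //; lia.
- apply/eqP => eq_yv; apply: (disj j k ne_jk); exists v, h, be, c, d.
  by rewrite -{1}eq_yv; split=> //; lia.
Qed.

Variables (i : 'I_n) (a : V) (t t' : nat).

Definition endpoint_move_near :=
  exists j : 'I_n, j != i /\ exists (a' : V) (t'' : nat),
    [/\ t < t'' < t', ((S j).1, a', t'') \in sol j \/ (a', (S j).2, t'') \in sol j
      & ug_dist_le T E a a' n].

(* [K] is the set of walks met so far; walk [k] goes from [u] to [v] at time [c]
   and back at time [d]. *)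
Definition detour_chain (K : {set 'I_n}) k u v c d :=
  [/\ k \notin K /\ i \in k |: K, t <= c /\ d <= t',
      forall l x, l \in K -> x \in sol l -> trtime x < c \/ d < trtime x,
      exists p1 p2, sol k = p1 ++ (u, v, c) :: (v, u, d) :: p2
    & ug_dist_le T E a u #|K|].

Lemma detour_chain_step K k u v c d : detour_chain K k u v c d ->
  endpoint_move_near \/ exists j x g h, detour_chain (k |: K) j x u g h.
Proof.
case=> [[k_notin_K i_in] [le_tc le_dt'] K_avoid [p1 [p2 sol_k]] dist_u].
have [walks _] := sol_ok.
have [j ne_jk [g [h [lt_cg lt_hd occ_j]]]] := minimal_detour_visited sol_ok sol_min sol_k.
have le_gh := twalk_occupies_le (walks j) occ_j.
have j_notin : j \notin k |: K.
  have [y y_in time_y] := occupies_start occ_j.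
  rewrite !inE negb_or ne_jk /=; apply/negP => j_in_K.
  by have := K_avoid j y j_in_K y_in; lia.
have ne_ji : j != i by apply: contraNneq j_notin => ->.
have near_u a' : ug_edge T E u a' -> ug_dist_le T E a a' n.
  move=> ua'; apply: ug_dist_le_mono (ug_dist_le_step dist_u ua') _.
  have := card_notin_lt j_notin; rewrite cardsU1 k_notin_K card_ord.
  exact: ltnW.
case: (twalk_occupies_cases (walks j) occ_j) =>
  [[y [src_u eq_hg y_in]]|[x [dst_u eq_hg x_in]]|[x [y [l1 [l2 sol_j]]]]].
- left; exists j; split=> //; exists y, g; split; [lia|by left|apply: near_u].
  by rewrite src_u; exact: twalk_ug_edge (walks j) y_in.
- left; exists j; split=> //; exists x, g; split; [lia|by right|apply: near_u].
  by rewrite dst_u; exact: (twalk_ug_edge_rev (proj1 line_E) (walks j) x_in).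
have eq_xy := detour_visitor_returns ne_jk sol_k sol_j (ltnW lt_cg) (ltnW lt_hd).
have walk_k := walks k; rewrite sol_k in walk_k.
right; exists j, x, g, h; split.
- by split=> //; rewrite !inE in i_in *; rewrite i_in orbT.
- lia.
- move=> l z; rewrite in_setU1 => /orP [/eqP -> z_in|l_in_K z_in].
    have : trtime z <= c \/ d <= trtime z.
      by apply: twalk_time_outside walk_k _; rewrite -sol_k.
    lia.
  by have := K_avoid l z l_in_K z_in; lia.
- by exists l1, l2; rewrite sol_j -eq_xy.
- rewrite cardsU1 k_notin_K; apply: ug_dist_le_step dist_u _.
  have xu_in : (x, u, g) \in sol j by rewrite sol_j mem_cat mem_head orbT.
  exact: (twalk_ug_edge_rev (proj1 line_E) (walks j) xu_in).
Qed.

Lemma detour_chain_endpoint_move K k u v c d :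
  detour_chain K k u v c d -> endpoint_move_near.
Proof.
have [m le_Km] : exists m, n - #|K| <= m by exists (n - #|K|).
elim: m K k u v c d le_Km => [|m IH] K k u v c d le_Km chain;
  have [[k_notin_K _] _ _ _ _] := chain.
  have lt_Kn : #|K| < n by have := card_notin_lt k_notin_K; rewrite card_ord.
  by exfalso; lia.
case: (detour_chain_step chain) => [//|[j [x [g [h chain']]]]].
have card_kK : #|k |: K| = #|K|.+1 by rewrite cardsU1 k_notin_K.
by apply: IH chain'; rewrite card_kK; lia.
Qed.

End DetourChain.

Theorem mainTheorem7 (V : finType) (T : nat) (E : nat -> rel V) (n : nat)
  (S : 'I_n -> V * V) (sol : 'I_n -> seq (V * V * nat)) :
  temporal_line T E ->
  is_solution T E S sol ->
  (forall sol', is_solution T E S sol' ->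
     \sum_(i < n) size (sol i) <= \sum_(i < n) size (sol' i)) ->
  forall (i : 'I_n) (w1 w2 : seq (V * V * nat)) (a b : V) (t t' : nat),
    sol i = w1 ++ [:: (a, b, t); (b, a, t')] ++ w2 ->
    t < t' ->
    exists j : 'I_n, j != i /\
      exists (a' : V) (t'' : nat),
        [/\ t < t'' < t',
            ((S j).1, a', t'') \in sol j \/ (a', (S j).2, t'') \in sol j
          & ug_dist_le T E a a' n].
Proof.
move=> line_E sol_ok sol_min i w1 w2 a b t t' sol_i _.
apply: (detour_chain_endpoint_move line_E sol_ok sol_min (K := set0) (k := i)
  (u := a) (v := b) (c := t) (d := t')).
split=> //.
- by rewrite in_set0 setU11.
- by move=> l x; rewrite in_set0.
- by exists w1, w2.
- by rewrite cards0; exists [::].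
Qed.
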